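(* Fix finite sets $\mathcal{R},\mathcal{V},\mathcal{R}',\mathcal{V}'$ with $|\mathcal{R}|=|\mathcal{R}'|$. For any positive integer $k$, any deterministic privacy mechanism $\Delta=(\mathcal{R},\mathcal{V},\mathcal{R}',\mathcal{V}',\Pi,\Delta)$, and any released table $\tau'$ on $(\mathcal{R}',\mathcal{V}')$: $$\tau' \text{ is } k\text{-anonymous} \iff (\Delta,\tau') \text{ is } Pk\text{-anonymous}.$$
   Context: A table on $(\mathcal{R},\mathcal{V})$ ($\mathcal{R},\mathcal{V}$ finite) is a map $\tau:\mathcal{R}\to\mathcal{V}$. Let $\mathcal{T}$ be the set of all tables on $(\mathcal{R},\mathcal{V})$ (''private tables'') and $\mathcal{T}'$ the set of all tables on $(\mathcal{R}',\mathcal{V}')$ (''released tables''). For sets $X,Y$, $X\to Y$ denotes the set of all maps from $X$ to $Y$. A privacy mechanism is a 6-tuple $(\mathcal{R},\mathcal{V},\mathcal{R}',\mathcal{V}',\Pi,\Delta)$ (also just denoted $\Delta$) where $\Pi$ is a random variable uniformly distributed over the bijections $\mathcal{R}\to\mathcal{R}'$ and $\Delta$ is a random variable with values in $\mathcal{T}\to(\mathcal{R}\to\mathcal{V}')$. It is a privacy mechanism from $T$ to $T'$ (random variables on $\mathcal{T}$ and $\mathcal{T}'$) if $T,\Pi,\Delta$ are mutually independent and $\Delta(T)=T'\circ\Pi$. The mechanism is deterministic if for every $\tau\in\mathcal{T}$ there is a unique table $\hat\tau$ with $\Delta(\tau)=\hat\tau$ (with probability one). $k$-anonymity: a released table $\tau'$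 is $k$-anonymous if for every $r'\in\mathcal{R}'$ there are at least $k$ elements $\hat r'\in\mathcal{R}'$ with $\tau'(\hat r')=\tau'(r')$. $Pk$-anonymity: for real $k\ge 1$ and $\tau'\in\mathcal{T}'$, the pair $(\Delta,\tau')$ is $Pk$-anonymous if for every random variable $T$ on $\mathcal{T}$ and $T'$ on $\mathcal{T}'$ such that $\Delta$ is a privacy mechanism from $T$ to $T'$, and every $r\in\mathcal{R}$, $r'\in\mathcal{R}'$, one has $\Pr[\Pi(r)=r'\mid T'=\tau']\le 1/k$.
   Formalization: The implication from Pk-anonymity to k-anonymity holds only for τ′ with Pr[T′=τ′] > 0 for some T, T′ such that Δ is a privacy mechanism from T to T′, and Δ(T)=T′∘Π need only hold with probability one. Apart from conventions, each condition added here is assumed in the paper as well or is needed for the statement above to hold. *)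

From HB Require Import structures.
From mathcomp Require Import all_boot all_order all_algebra.
From mathcomp Require Import all_classical all_reals all_analysis.
Set Implicit Arguments. Unset Strict Implicit. Unset Printing Implicit Defensive.
Import Order.TTheory GRing.Theory Num.Theory.
Local Open Scope classical_set_scope.
Local Open Scope ring_scope.

Definition table (I U : finType) := {ffun I -> U}.

Definition is_bij {I J : finType} (f : {ffun I -> J}) : bool :=
  injectiveb f && [forall y : J, exists x : I, f x == y].

Definition k_anonymous {R' V' : finType} (k : nat) (t : table R' V') : Prop :=
  forall r' : R', (k <= #|[set r2 : R' | t r2 == t r']|)%N.

Definition tcomp {R R' V' : finType} (t' : table R' V') (pi : {ffun R -> R'})
  : table R V' := [ffun r => t' (pi r)].

Section Prob.
Context {d : measure_display} {Om : measurableType d} {Rr : realType}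
  (P : probability Om Rr).

Definition Pr (A : set Om) : Rr := fine (P A).

(* conditional probability Pr[A | B] (used only when Pr B > 0) *)
Definition condPr (A B : set Om) : Rr := Pr (A `&` B) / Pr B.

Definition frv {A : finType} (X : Om -> A) : Prop :=
  forall a : A, measurable (X @^-1` [set a]).

Definition indep3 {A B C : finType} (X : Om -> A) (Y : Om -> B) (Z : Om -> C)
  : Prop :=
  forall (SA : {set A}) (SB : {set B}) (SC : {set C}),
    P ([set w | X w \in SA] `&` [set w | Y w \in SB] `&` [set w | Z w \in SC])
    = (P [set w | X w \in SA] * P [set w | Y w \in SB]
       * P [set w | Z w \in SC])%E.

Section Mech.
Context {R V R' V' : finType}.

Definition privacy_mechanism (Pi : Om -> {ffun R -> R'})
  (Delta : Om -> {ffun table R V -> table R V'}) : Prop :=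
  [/\ frv Pi,
      (forall pi : {ffun R -> R'},
         P [set w | Pi w = pi] =
         (if is_bij pi then (#|[set f : {ffun R -> R'} | is_bij f]|%:R)^-1
          else 0)%:E)
    & frv Delta].

Definition mechanism_from (Pi : Om -> {ffun R -> R'})
  (Delta : Om -> {ffun table R V -> table R V'})
  (T : Om -> table R V) (T' : Om -> table R' V') : Prop :=
  [/\ frv T, frv T', indep3 T Pi Delta
    & P [set w | Delta w (T w) = tcomp (T' w) (Pi w)] = 1%E].

Definition deterministic (Delta : Om -> {ffun table R V -> table R V'}) : Prop :=
  forall tau : table R V, exists! tauh : table R V',
    P [set w | Delta w tau = tauh] = 1%E.

(* Pk-anonymity of (Delta, tau') (conditional probabilities are only
   required when the conditioning event has positive probability) *)
Definition Pk_anonymous (Pi : Om -> {ffun R -> R'})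
  (Delta : Om -> {ffun table R V -> table R V'}) (k : Rr) (tau' : table R' V')
  : Prop :=
  forall (T : Om -> table R V) (T' : Om -> table R' V'),
    mechanism_from Pi Delta T T' ->
    forall (r : R) (r' : R'),
      0 < Pr [set w | T' w = tau'] ->
      condPr [set w | Pi w r = r'] [set w | T' w = tau'] <= k^-1.

(* tau' can actually be released: it has positive probability for some input *)
Definition releasable (Pi : Om -> {ffun R -> R'})
  (Delta : Om -> {ffun table R V -> table R V'}) (tau' : table R' V') : Prop :=
  exists (T : Om -> table R V) (T' : Om -> table R' V'),
    mechanism_from Pi Delta T T' /\ 0 < Pr [set w | T' w = tau'].

End Mech.
End Prob.

From HB Require Import structures.
From mathcomp Require Import all_boot all_order all_algebra perm.
From mathcomp Require Import all_classical all_reals all_analysis.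
Set Implicit Arguments. Unset Strict Implicit. Unset Printing Implicit Defensive.
Import Order.TTheory GRing.Theory Num.Theory.

(* Since Delta is deterministic and Pi is independent of the private table T, the
   release T' equals t' exactly when D(T) = t' o Pi, so given T = tau the event
   [T' = t'] selects the bijections pi matching D(tau) with t', each with the same
   weight.  Composing with the transposition of two positions carrying the same value
   of t' shows that among these, pi r is equidistributed over the fibre of t' that
   contains it.  Hence Pr[Pi r = r' | T' = t'] is an average of the numbers
   1/|fibre of r'| and 0.  k-anonymity bounds every fibre from below by k; conversely,
   a constant private table tau0 for which t' can be released gives exactly
   1/|fibre of r'| for a suitable r. *)

Lemma is_bij_tcomp_inj {R R' V' : finType} (pi : {ffun R -> R'}) :
  is_bij pi -> injective (@tcomp R R' V' ^~ pi).
Proof.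
case/andP => _ /forallP pi_onto t1 t2 /ffunP e12; apply/ffunP => x.
by have /existsP [a /eqP <-] := pi_onto x; have := e12 a; rewrite !ffunE.
Qed.

Lemma is_bij_postcomp {R R' : finType} (s : {perm R'}) (pi : {ffun R -> R'}) :
  is_bij [ffun a => s (pi a)] = is_bij pi.
Proof.
apply/andP/andP => -[/injectiveP pi_inj /forallP pi_onto]; split.
- by apply/injectiveP => a b e; apply: pi_inj; rewrite !ffunE e.
- apply/forallP => y; have /existsP [a /eqP e] := pi_onto (s y).
  by apply/existsP; exists a; rewrite ffunE in e; rewrite (perm_inj e).
- by apply/injectiveP => a b; rewrite !ffunE => /perm_inj; apply: pi_inj.
- apply/forallP => y; have /existsP [a /eqP e] := pi_onto (s^-1 y)%g.
  by apply/existsP; exists a; rewrite ffunE e permKV.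
Qed.

Lemma k_anonymousP {R' V' : finType} (k : nat) (t : table R' V') :
  k_anonymous k t <-> forall r', (k <= #|[set r2 | t r2 == t r']|)%N.
Proof.
have fibreE r' : #|[set r2 | t r2 == t r']%classic| = #|[set r2 | t r2 == t r']|.
  by apply: eq_card => z; rewrite inE /in_set; apply/asboolP/idP.
by split=> ka r'; [rewrite -fibreE | rewrite fibreE].
Qed.

Section MatchingBijections.
Context {R R' V' : finType} (th : table R V') (t : table R' V') (r : R).

Definition matching_bijs := [set pi : {ffun R -> R'} | is_bij pi && (th == tcomp t pi)].

Definition matching_bijs_at (x : R') := [set pi in matching_bijs | pi r == x].

Lemma card_matching_bijs_at_tperm x y : t x = t y ->
  (#|matching_bijs_at x| <= #|matching_bijs_at y|)%N.
Proof.
move=> txy; pose f (pi : {ffun R -> R'}) := [ffun a => tperm x y (pi a)].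
have f_inj : injective f.
  by move=> p q /ffunP e; apply/ffunP => a; have := e a; rewrite !ffunE => /perm_inj.
rewrite -(card_imset _ f_inj); apply/subset_leq_card/fintype.subsetP.
move=> q /finset.imsetP [pi].
rewrite !inE => /andP [/andP [pi_bij /eqP th_pi] /eqP pi_r] ->.
rewrite is_bij_postcomp pi_bij ffunE pi_r tpermL eqxx andbT th_pi; apply/eqP/ffunP => a.
by rewrite !ffunE; case: tpermP => // ->.
Qed.

Lemma matching_bijs_at_value x : (0 < #|matching_bijs_at x|)%N -> t x = th r.
Proof.
by case/card_gt0P => pi; rewrite !inE => /andP [/andP [_ /eqP ->] /eqP <-]; rewrite ffunE.
Qed.

Lemma card_matching_bijs x : (0 < #|matching_bijs_at x|)%N ->
  #|matching_bijs| = (#|[set z | t z == t x]| * #|matching_bijs_at x|)%N.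
Proof.
move=> at_x_gt0.
have -> : #|matching_bijs| = (\sum_z #|matching_bijs_at z|)%N.
  rewrite -sum1_card (partition_big (fun pi : {ffun R -> R'} => pi r) predT) //=.
  by apply: eq_bigr => z _; rewrite -sum1_card; apply: eq_bigl => pi; rewrite !inE.
rewrite (bigID (fun z => t z == t x) predT) /= [X in (_ + X)%N]big1 ?addn0; last first.
  move=> z /negP txz; apply/eqP; rewrite eqn0Ngt; apply/negP.
  move=> /matching_bijs_at_value tz; apply: txz.
  by rewrite tz (matching_bijs_at_value at_x_gt0).
rewrite -sum_nat_const; apply: eq_big => z; first by rewrite inE.
by move=> /eqP tzx; apply/eqP; rewrite eqn_leq !card_matching_bijs_at_tperm.
Qed.

Lemma k_anonymous_card_matching_bijs_at (k : nat) x : k_anonymous k t ->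
  (k * #|matching_bijs_at x| <= #|matching_bijs|)%N.
Proof.
move=> /k_anonymousP t_kanon.
have [->|at_x_gt0] := posnP #|matching_bijs_at x|; first by rewrite muln0.
by rewrite (card_matching_bijs at_x_gt0) leq_mul2r t_kanon orbT.
Qed.

End MatchingBijections.

Definition unpermute {R R' V' : finType} (pi : {ffun R -> R'}) (th : table R V')
    (t0 : table R' V') : table R' V' :=
  [ffun x => if [pick a | pi a == x] is Some a then th a else t0 x].

Lemma tcomp_unpermute {R R' V' : finType} (pi : {ffun R -> R'}) (th : table R V')
    (t0 : table R' V') :
  injective pi -> tcomp (unpermute pi th t0) pi = th.
Proof.
move=> pi_inj; apply/ffunP => a; rewrite !ffunE.
by case: pickP => [b /eqP/pi_inj ->|/(_ a)]; rewrite ?eqxx.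
Qed.

Local Open Scope classical_set_scope.
Local Open Scope ring_scope.

Section FiniteRandomVariables.
Context {d : measure_display} {Om : measurableType d} {Rr : realType}
  (P : probability Om Rr).

Lemma Pr_EFin (A : set Om) : measurable A -> P A = (Pr P A)%:E.
Proof. by move=> mA; rewrite /Pr fineK // fin_num_measure. Qed.

Lemma Pr_setU (A B : set Om) : measurable A -> measurable B -> A `&` B = set0 ->
  Pr P (A `|` B) = Pr P A + Pr P B.
Proof.
move=> mA mB AB0; apply: EFin_inj.
rewrite EFinD -!Pr_EFin //; last exact: measurableU.
by have := measureU P mA mB AB0.
Qed.

Section Distribution.
Context {A : finType} (X : Om -> A) (X_frv : frv X).

Definition pmf (a : A) : Rr := Pr P [set w | X w = a].

Lemma mem_seq_preimageE (a : A) (s : seq A) :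
  [set w | X w \in a :: s] = X @^-1` [set a] `|` [set w | X w \in s].
Proof.
apply/seteqP; split=> w /=; rewrite in_cons.
  by case/orP => [/eqP|]; [left|right].
by case=> [->|->]; rewrite ?eqxx ?orbT.
Qed.

Lemma measurable_mem_seq (s : seq A) : measurable [set w | X w \in s].
Proof.
elim: s => [|a s IHs].
  by rewrite (_ : [set w | _] = set0) //; apply/seteqP; split.
by rewrite mem_seq_preimageE; apply: measurableU; [exact: X_frv|].
Qed.

Lemma Pr_mem_seq (s : seq A) : uniq s ->
  Pr P [set w | X w \in s] = \sum_(a <- s) pmf a.
Proof.
elim: s => [_|a s IHs /= /andP [a_notin_s s_uniq]].
  by rewrite big_nil (_ : [set w | _] = set0) /Pr ?measure0 //; apply/seteqP; split.
rewrite big_cons -IHs // mem_seq_preimageE Pr_setU //; first exact: measurable_mem_seq.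
by apply/seteqP; split=> w //= [-> a_in_s]; rewrite a_in_s in a_notin_s.
Qed.

Lemma preimage_pred_enumE (Q : pred A) :
  [set w | Q (X w)] = [set w | X w \in enum Q].
Proof. by apply/seteqP; split=> w /=; rewrite mem_enum. Qed.

Lemma measurable_pred (Q : pred A) : measurable [set w | Q (X w)].
Proof. by rewrite preimage_pred_enumE; exact: measurable_mem_seq. Qed.

Lemma Pr_predE (Q : pred A) : Pr P [set w | Q (X w)] = \sum_(a | Q a) pmf a.
Proof. by rewrite preimage_pred_enumE Pr_mem_seq ?enum_uniq // big_enum. Qed.

Lemma pmf_ge0 (a : A) : 0 <= pmf a.
Proof. exact: fine_ge0. Qed.

Lemma sum_pmf : \sum_a pmf a = 1.
Proof.
rewrite -(Pr_predE predT) /Pr (_ : [set w | _] = setT) ?probability_setT //.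
by apply/seteqP; split.
Qed.

Lemma pmf_eq0_as1 (Q : pred A) : Pr P [set w | Q (X w)] = 1 ->
  forall a, ~~ Q a -> pmf a = 0.
Proof.
move=> Q_as1 a Qa_false.
have : \sum_(b | ~~ Q b) pmf b = 0.
  by apply/(addrI 1); rewrite addr0 -[in RHS]sum_pmf [RHS](bigID Q) /= -(Pr_predE Q) Q_as1.
move/eqP; rewrite psumr_eq0 => [/allP/(_ a (mem_index_enum a))|b _].
  by rewrite Qa_false => /eqP.
exact: pmf_ge0.
Qed.

Lemma as1_pmf_eq0 (Q : pred A) : (forall a, ~~ Q a -> pmf a = 0) ->
  Pr P [set w | Q (X w)] = 1.
Proof.
by move=> Q_pmf0; rewrite Pr_predE -sum_pmf [RHS](bigID Q) /= [X in _ + X]big1 ?addr0.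
Qed.

Lemma Pr_congr_as1 (G Q1 Q2 : pred A) : Pr P [set w | G (X w)] = 1 ->
  {in G, Q1 =1 Q2} -> Pr P [set w | Q1 (X w)] = Pr P [set w | Q2 (X w)].
Proof.
move=> G_as1 Q12; rewrite !Pr_predE big_mkcond [RHS]big_mkcond.
apply: eq_bigr => a _; have [Ga|Ga_false] := boolP (G a).
  by rewrite Q12.
by rewrite (pmf_eq0_as1 G_as1 Ga_false) !if_same.
Qed.

Lemma as1_andb (Q1 Q2 : pred A) : Pr P [set w | Q1 (X w)] = 1 ->
  Pr P [set w | Q2 (X w)] = 1 -> Pr P [set w | Q1 (X w) && Q2 (X w)] = 1.
Proof.
move=> Q1_as1 Q2_as1; apply: (as1_pmf_eq0 (Q := fun a => Q1 a && Q2 a)) => a.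
by rewrite negb_and => /orP [/(pmf_eq0_as1 Q1_as1)|/(pmf_eq0_as1 Q2_as1)].
Qed.

Lemma as1_sub (Q1 Q2 : pred A) : Pr P [set w | Q1 (X w)] = 1 ->
  subpred Q1 Q2 -> Pr P [set w | Q2 (X w)] = 1.
Proof.
move=> Q1_as1 Q12; rewrite -(Pr_congr_as1 (Q1 := predT) Q1_as1) => [|a /Q12 ->//].
by apply: as1_pmf_eq0.
Qed.

End Distribution.

Lemma frv_comp {A B : finType} (X : Om -> A) (f : A -> B) :
  frv X -> frv (fun w => f (X w)).
Proof.
move=> X_frv b; rewrite (_ : _ @^-1` _ = [set w | f (X w) == b]).
  exact: (measurable_pred X_frv (fun a => f a == b)).
by apply/seteqP; split=> w /= /eqP.
Qed.

Lemma frv_pair {A B : finType} (X : Om -> A) (Y : Om -> B) :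
  frv X -> frv Y -> frv (fun w => (X w, Y w)).
Proof.
move=> X_frv Y_frv [a b].
rewrite (_ : _ @^-1` _ = X @^-1` [set a] `&` Y @^-1` [set b]).
  exact: measurableI.
by apply/seteqP; split=> w /= => [[-> ->]|[-> ->]].
Qed.

Lemma frv_cst {A : finType} (a : A) : frv (fun _ : Om => a).
Proof.
move=> b; have [->|ab] := eqVneq a b.
  by rewrite (_ : _ @^-1` _ = setT) //; apply/seteqP; split.
rewrite (_ : _ @^-1` _ = set0) //.
by apply/seteqP; split=> w //= ab'; rewrite ab' eqxx in ab.
Qed.

Lemma sum_pmf_cst {A : finType} (a0 : A) (F : A -> Rr) :
  \sum_a pmf (fun _ : Om => a0) a * F a = F a0.
Proof.
rewrite (bigD1 a0) //= big1 ?addr0 => [|a a_neq].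
  rewrite /pmf (_ : [set w | _] = setT) /Pr ?probability_setT ?mul1r //.
  by apply/seteqP; split.
rewrite /pmf (_ : [set w | _] = set0) /Pr ?measure0 ?mul0r //.
by apply/seteqP; split=> w //= e; rewrite e eqxx in a_neq.
Qed.

End FiniteRandomVariables.

Lemma set_eqbE {T : Type} {E : eqType} (f g : T -> E) :
  [set w | f w == g w] = [set w | f w = g w].
Proof. by apply/seteqP; split=> w /= /eqP. Qed.

Lemma set_in_set1E {T : Type} {A : finType} (f : T -> A) (a : A) :
  [set w | f w \in [set a]%SET] = [set w | f w = a].
Proof. by apply/seteqP; split=> w /=; rewrite inE => /eqP. Qed.

Section Mechanism.
Context {d : measure_display} {Om : measurableType d} {Rr : realType}
  (P : probability Om Rr).
Context {R V R' V' : finType} (Pi : Om -> {ffun R -> R'})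
  (Delta : Om -> {ffun table R V -> table R V'}).
Hypothesis Pi_Delta_mech : privacy_mechanism P Pi Delta.
Variable D : {ffun table R V -> table R V'}.
Hypothesis Delta_D_as1 : forall tau, P [set w | Delta w tau = D tau] = 1%E.

Let bij_weight : Rr := (#|[set f : {ffun R -> R'} | is_bij f]|%:R)^-1.

Let frv_Pi : frv Pi. Proof. by case: Pi_Delta_mech. Qed.
Let frv_Delta : frv Delta. Proof. by case: Pi_Delta_mech. Qed.

Lemma pmf_Pi pi : pmf P Pi pi = if is_bij pi then bij_weight else 0.
Proof. by rewrite /pmf /Pr; case: Pi_Delta_mech => _ -> _; case: (is_bij pi). Qed.

Lemma Pi_bij_as1 : Pr P [set w | is_bij (Pi w)] = 1.
Proof. by apply: (as1_pmf_eq0 frv_Pi) => pi /negPf pi_nbij; rewrite pmf_Pi pi_nbij. Qed.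

Lemma Delta_as1 : Pr P [set w | Delta w == D] = 1.
Proof.
apply: (as1_pmf_eq0 frv_Delta (Q := eq_op^~ D)) => f /eqP f_neq.
have /existsP [tau f_tau] : [exists tau, f tau != D tau].
  rewrite -negb_forall; apply: contra_notN f_neq => /forallP f_eq.
  by apply/ffunP => tau; apply/eqP.
apply: (pmf_eq0_as1 frv_Delta (Q := fun g => g tau == D tau)) f_tau.
by rewrite set_eqbE /Pr Delta_D_as1.
Qed.

Section Release.
Variables (T : Om -> table R V) (T' : Om -> table R' V').
Hypothesis mech_from : mechanism_from P Pi Delta T T'.

Let frv_T : frv T. Proof. by case: mech_from. Qed.
Let frv_T' : frv T'. Proof. by case: mech_from. Qed.

Local Notation Z_type :=
  (table R V * {ffun R -> R'} * {ffun table R V -> table R V'} * table R' V')%type.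

Lemma pmf_T_Pi tau pi :
  pmf P (fun w => (T w, Pi w)) (tau, pi) = pmf P T tau * pmf P Pi pi.
Proof.
case: mech_from => _ _ T_Pi_Delta_indep _.
have := T_Pi_Delta_indep [set tau]%SET [set pi]%SET [set: _]%SET.
rewrite (_ : [set w | Delta w \in _] = setT); last by apply/seteqP; split=> w; rewrite /= inE.
rewrite setIT probability_setT mule1 !set_in_set1E => T_Pi_indep.
rewrite /pmf /Pr (_ : [set w | _] = [set w | T w = tau] `&` [set w | Pi w = pi]).
  by rewrite T_Pi_indep fineM //; apply: fin_num_measure; [exact: frv_T|exact: frv_Pi].
by apply/seteqP; split=> w /= => [[-> ->]|[-> ->]].
Qed.

Lemma Pr_Pi_release (Q : pred {ffun R -> R'}) (t : table R' V') :
  Pr P [set w | Q (Pi w) && (T' w == t)] =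
  \sum_tau pmf P T tau * (bij_weight *
    #|[set pi in matching_bijs (D tau) t | Q pi]|%:R).
Proof.
pose Z w : Z_type := (T w, Pi w, Delta w, T' w).
have Z_frv : frv Z by repeat apply: frv_pair.
pose consistent (z : Z_type) :=
  [&& is_bij z.1.1.2, z.1.2 == D & z.1.2 z.1.1.1 == tcomp z.2 z.1.1.2].
have consistent_as1 : Pr P [set w | consistent (Z w)] = 1.
  have release_as1 : Pr P [set w | Delta w (T w) == tcomp (T' w) (Pi w)] = 1.
    by case: mech_from => _ _ _; rewrite /Pr set_eqbE => ->.
  apply: (as1_andb Z_frv (Q1 := fun z : Z_type => is_bij z.1.1.2)
    (Q2 := fun z => (z.1.2 == D) && (z.1.2 z.1.1.1 == tcomp z.2 z.1.1.2))).
    exact: Pi_bij_as1.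
  exact: (as1_andb Z_frv (Q1 := fun z : Z_type => z.1.2 == D)
    (Q2 := fun z => z.1.2 z.1.1.1 == tcomp z.2 z.1.1.2) Delta_as1 release_as1).
transitivity (Pr P [set w | Q (Pi w) && (D (T w) == tcomp t (Pi w))]).
  apply: (Pr_congr_as1 Z_frv consistent_as1 (Q1 := fun z => Q z.1.1.2 && (z.2 == t))
    (Q2 := fun z => Q z.1.1.2 && (D z.1.1.1 == tcomp t z.1.1.2))) => -[[[tau pi] f] t'].
  rewrite unfold_in /consistent /= => /and3P [pi_bij /eqP -> /eqP ->].
  by rewrite (inj_eq (is_bij_tcomp_inj pi_bij)).
rewrite (Pr_predE P (frv_pair frv_T frv_Pi) (fun y => Q y.2 && (D y.1 == tcomp t y.2))).
pose summand tau pi :=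
  if Q pi && (D tau == tcomp t pi) then pmf P T tau * pmf P Pi pi else 0.
transitivity (\sum_tau \sum_pi summand tau pi).
  by rewrite pair_bigA big_mkcond; apply: eq_bigr => -[tau pi] _; rewrite /summand pmf_T_Pi.
apply: eq_bigr => tau _.
rewrite mulr_natr -sumr_const big_distrr [RHS]big_mkcond /=; apply: eq_bigr => pi _.
rewrite /summand !inE pmf_Pi.
by case: (is_bij pi); case: (Q pi); case: (_ == _); rewrite ?mulr0.
Qed.

Lemma Pr_release t : Pr P [set w | T' w = t] =
  \sum_tau pmf P T tau * (bij_weight * #|matching_bijs (D tau) t|%:R).
Proof.
rewrite (_ : [set w | _] = [set w | predT (Pi w) && (T' w == t)]); last first.
  by apply/seteqP; split=> w /= /eqP.
rewrite Pr_Pi_release; apply: eq_bigr => tau _; congr (_ * (_ * _%:R)).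
by apply: eq_card => pi; rewrite inE andbT.
Qed.

Lemma Pr_Pi_at_release t r r' :
  Pr P ([set w | Pi w r = r'] `&` [set w | T' w = t]) =
  \sum_tau pmf P T tau * (bij_weight * #|matching_bijs_at (D tau) t r r'|%:R).
Proof.
rewrite -Pr_Pi_release; congr (Pr P _).
by apply/seteqP; split=> w /= => [[-> ->]|/andP [/eqP -> /eqP ->]]; rewrite ?eqxx.
Qed.

End Release.

Lemma releasable_matching_bijs t : releasable P Pi Delta t ->
  exists tau0, (0 < #|matching_bijs (D tau0) t|)%N.
Proof.
case=> T [T' [mech_from release_gt0]].
have [tau0 ?|no_match] := pickP (fun tau => 0 < #|matching_bijs (D tau) t|)%N.
  by exists tau0.
move: release_gt0; rewrite (Pr_release mech_from) big1 ?ltxx // => tau _.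
by move/negbT: (no_match tau); rewrite -leqNgt leqn0 => /eqP ->; rewrite !mulr0.
Qed.

Local Notation PD_type := ({ffun R -> R'} * {ffun table R V -> table R V'})%type.

Lemma mechanism_from_cst T0 T0' (tau0 : table R V) (t0 : table R' V') :
  mechanism_from P Pi Delta T0 T0' ->
  mechanism_from P Pi Delta (fun=> tau0) (fun w => unpermute (Pi w) (Delta w tau0) t0).
Proof.
case=> _ _ T0_Pi_Delta_indep _; split.
- exact: frv_cst.
- exact: (frv_comp (fun pd : PD_type => unpermute pd.1 (pd.2 tau0) t0)
    (frv_pair frv_Pi frv_Delta)).
- move=> SA SB SC; have := T0_Pi_Delta_indep [set: table R V]%SET SB SC.
  rewrite (_ : [set w | T0 w \in _] = setT); last by apply/seteqP; split=> w; rewrite /= inE.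
  rewrite setTI probability_setT mul1e => Pi_Delta_indep.
  have [tau0_in|tau0_notin] := boolP (tau0 \in SA).
    rewrite (_ : [set _ | _] = setT); last by apply/seteqP; split.
    by rewrite setTI probability_setT mul1e.
  rewrite (_ : [set _ | _] = set0); last by apply/seteqP; split.
  by rewrite !set0I measure0 !mul0e.
- pose release_ok (pd : PD_type) :=
    pd.2 tau0 == tcomp (unpermute pd.1 (pd.2 tau0) t0) pd.1.
  have release_ok_as1 : Pr P [set w | release_ok (Pi w, Delta w)] = 1.
    apply: (as1_sub (frv_pair frv_Pi frv_Delta) (Q1 := fun pd : PD_type => is_bij pd.1)).
      exact: Pi_bij_as1.
    move=> [pi f] /andP [/injectiveP pi_inj _].
    by rewrite /release_ok tcomp_unpermute ?eqxx.
  rewrite -set_eqbE (Pr_EFin P (measurable_pred (frv_pair frv_Pi frv_Delta) release_ok)).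
  by rewrite release_ok_as1.
Qed.

Lemma Pk_anonymous_of_k_anonymous (k : nat) (t : table R' V') : (0 < k)%N ->
  k_anonymous k t -> Pk_anonymous P Pi Delta k%:R t.
Proof.
move=> k_gt0 t_kanon T T' mech_from r r' release_gt0.
rewrite /condPr ler_pdivrMr // (Pr_Pi_at_release mech_from) (Pr_release mech_from).
rewrite mulrC ler_pdivlMr ?ltr0n // big_distrl; apply: ler_sum => tau _ /=.
rewrite -!mulrA -natrM; apply: ler_wpM2l; first exact: pmf_ge0.
apply: ler_wpM2l; first by rewrite invr_ge0 ler0n.
by rewrite ler_nat mulnC k_anonymous_card_matching_bijs_at.
Qed.

Lemma k_anonymous_of_Pk_anonymous (k : nat) (t : table R' V') : (0 < k)%N ->
  releasable P Pi Delta t -> Pk_anonymous P Pi Delta k%:R t -> k_anonymous k t.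
Proof.
move=> k_gt0 t_rel t_Pk; apply/k_anonymousP => r'.
have [T0 [T0' [mech_from0 _]]] := t_rel.
have [tau0 /card_gt0P [pi0 pi0_match]] := releasable_matching_bijs t_rel.
move: (pi0_match); rewrite inE => /andP [pi0_bij _].
have /andP [_ /forallP /(_ r') /existsP [r /eqP pi0_r]] := pi0_bij.
have at_gt0 : (0 < #|matching_bijs_at (D tau0) t r r'|)%N.
  by apply/card_gt0P; exists pi0; rewrite inE pi0_match pi0_r eqxx.
have bij_weight_gt0 : 0 < bij_weight.
  by rewrite invr_gt0 ltr0n; apply/card_gt0P; exists pi0; rewrite inE.
have mech_from := mechanism_from_cst tau0 t mech_from0.
have all_gt0 : (0 < #|matching_bijs (D tau0) t|)%N.
  apply: leq_trans at_gt0 _; apply/subset_leq_card/fintype.subsetP => pi.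
  by rewrite inE => /andP [].
have release_gt0 : 0 < Pr P [set w | unpermute (Pi w) (Delta w tau0) t = t].
  by rewrite (Pr_release mech_from) sum_pmf_cst mulr_gt0 // ltr0n.
have := t_Pk _ _ mech_from r r' release_gt0.
rewrite /condPr (Pr_Pi_at_release mech_from) (Pr_release mech_from) !sum_pmf_cst.
rewrite ler_pdivrMr ?mulr_gt0 ?ltr0n // mulrCA ler_pM2l // mulrC.
rewrite ler_pdivlMr ?ltr0n // -natrM ler_nat (card_matching_bijs at_gt0) mulnC.
by rewrite leq_pmul2r.
Qed.

End Mechanism.

Lemma deterministic_ffun {d : measure_display} {Om : measurableType d} {Rr : realType}
    (P : probability Om Rr) {R V V' : finType}
    (Delta : Om -> {ffun table R V -> table R V'}) :
  deterministic P Delta -> exists D : {ffun table R V -> table R V'},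
    forall tau, P [set w | Delta w tau = D tau] = 1%E.
Proof.
move=> Delta_det.
have /choice [D D_as1] : forall tau, exists th, P [set w | Delta w tau = th] = 1%E.
  by move=> tau; have [th [th_as1 _]] := Delta_det tau; exists th.
by exists [ffun tau => D tau] => tau; rewrite ffunE.
Qed.

Theorem theorem2 (R V R' V' : finType) (hcard : #|R| = #|R'|)
  (d : measure_display) (Om : measurableType d) (Rr : realType)
  (P : probability Om Rr)
  (Pi : Om -> {ffun R -> R'}) (Delta : Om -> {ffun table R V -> table R V'})
  (k : nat) (hk : (0 < k)%N) (tau' : table R' V') :
  privacy_mechanism P Pi Delta -> deterministic P Delta ->
  (k_anonymous k tau' -> Pk_anonymous P Pi Delta (k%:R : Rr) tau') /\
  (releasable P Pi Delta tau' ->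
     Pk_anonymous P Pi Delta (k%:R : Rr) tau' -> k_anonymous k tau').
Proof.
move=> Pi_Delta_mech /deterministic_ffun [D Delta_D_as1].
split; [exact: Pk_anonymous_of_k_anonymous | exact: k_anonymous_of_Pk_anonymous].
Qed.
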